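(* Let $X,Y$ be types, $R:X\to Y\to\mathbb P$ a binary relation, and $l$ a list over $X$ and $m$ a list over $Y$ with $|m|<|l|$. Suppose that for every $x\in l$ there is $y\in m$ with $R\,x\,y$. Then there exist lists $l_1,l_2,l_3$, elements $x_1,x_2$ of $X$ and an element $y\in m$ such that <ul> <li>$l=l_1\mathbin{++}x_1::l_2\mathbin{++}x_2::l_3$,</li> <li>$R\,x_1\,y$, and</li> <li>$R\,x_2\,y$.</li> </ul>
   Context: This is stated in constructive type theory, with no decidability of equality assumed on $X$ or $Y$. $|l|$ denotes the length of a list, $\mathbin{++}$ concatenation, $::$ cons, and $x\in l$ list membership. The existential quantifiers are propositional. *)

From Stdlib Require Export List.
Export ListNotations.

(* Induction on l, for all m at once. Pick a witness y of the head x of l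
   and cut it out of m, say m = m1 ++ y :: m2. Every element of the tail is
   then related either to y or to some element of m1 ++ m2. If some element
   of the tail is related to y, it forms the required pair with x. Otherwise
   the tail is covered by m1 ++ m2, which is still shorter than the tail, and
   the induction hypothesis applies. No decision procedure is needed, since
   the case split only asks for one of the two alternatives per element. *)

From Stdlib Require Import Lia.

Lemma exists_or_Forall_in (A : Type) (P Q : A -> Prop) (l : list A) :
  (forall x, In x l -> P x \/ Q x) ->
  (exists x, In x l /\ P x) \/ (forall x, In x l -> Q x).
Proof.
  induction l as [|a l IH]; intros HPQ.
  - right; intros x [].
  - destruct (HPQ a (in_eq a l)) as [Pa|Qa].
    + left; exists a; split; [apply in_eq | exact Pa].
    + destruct IH as [[x [Hx Px]]|HQ].
      * intros x Hx; apply HPQ, in_cons, Hx.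
      * left; exists x; split; [apply in_cons | ]; assumption.
      * right; intros x [<-|Hx]; auto.
Qed.

Lemma in_app_cons_weaken (A : Type) (y y' : A) (m1 m2 : list A) :
  In y' (m1 ++ m2) -> In y' (m1 ++ y :: m2).
Proof.
  intros Hy'; apply in_or_app.
  destruct (in_app_or _ _ _ Hy'); [left | right; right]; assumption.
Qed.

Lemma covered_by_elt_or_rest (X Y : Type) (R : X -> Y -> Prop)
    (l : list X) (m1 m2 : list Y) (y : Y) :
  (forall x, In x l -> exists y', In y' (m1 ++ y :: m2) /\ R x y') ->
  forall x, In x l -> R x y \/ exists y', In y' (m1 ++ m2) /\ R x y'.
Proof.
  intros Hcov x Hx.
  destruct (Hcov x Hx) as [y' [Hy' Rxy']].
  destruct (in_elt_inv _ _ _ _ Hy') as [<-|Hrest]; [left | right; exists y']; auto.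
Qed.

Theorem theorem7 (X Y : Type) (R : X -> Y -> Prop) (l : list X) (m : list Y) :
  length m < length l ->
  (forall x, In x l -> exists y, In y m /\ R x y) ->
  exists (l1 l2 l3 : list X) (x1 x2 : X) (y : Y),
    In y m /\ l = l1 ++ x1 :: l2 ++ x2 :: l3 /\ R x1 y /\ R x2 y.
Proof.
  revert m; induction l as [|x l IH]; intros m Hlen Hcov; [simpl in Hlen; lia|].
  destruct (Hcov x (in_eq x l)) as [y [Hy Rxy]].
  destruct (in_split _ _ Hy) as [m1 [m2 ->]].
  assert (Hcov_tail : forall x', In x' l -> exists y', In y' (m1 ++ y :: m2) /\ R x' y')
    by (intros x' Hx'; apply Hcov, in_cons, Hx').
  destruct (exists_or_Forall_in _ _ _ _ (covered_by_elt_or_rest X Y R l m1 m2 y Hcov_tail))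
    as [[x2 [Hx2 Rx2y]] | Hcov_rest].
  - destruct (in_split _ _ Hx2) as [l2 [l3 ->]].
    exists [], l2, l3, x, x2, y; auto.
  - destruct (IH (m1 ++ m2)) as (l1 & l2 & l3 & x1 & x2 & y' & Hy' & -> & R1 & R2);
      [rewrite length_app in *; simpl in *; lia | exact Hcov_rest |].
    exists (x :: l1), l2, l3, x1, x2, y'.
    repeat split; auto using in_app_cons_weaken.
Qed.
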